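(* For $n=2,3,\dots$ let $\Omega_n=\{1,\dots,n\}$, $\mathcal P_n=\mathcal P(\Omega_n)$, and $g_n$ the Fisher co-metric on $\mathcal P_n$. Let $\{h_n\}_{n\ge2}$ be given, where $h_n$ is a contravariant tensor field of degree 2 on $\mathcal P_n$ mapping each $p\in\mathcal P_n$ continuously to a bilinear form $h_{n,p}:T_p^*(\mathcal P_n)^2\to\mathbb R$ (not assumed symmetric or positive). The following are equivalent: (i) there is $c\in\mathbb R$ with $h_n=c\,g_n$ for all $n$; (ii) for all $m\le n$ and every Markov co-embedding $\Psi:\mathcal P_n\to\mathcal P_m$, $$h_{m,\Psi(q)}(\alpha,\beta)=h_{n,q}(\Psi_q^*\alpha,\Psi_q^*\beta)\quad\forall q\in\mathcal P_n,\ \forall\alpha,\beta\in T^*_{\Psi(q)}(\mathcal P_m).$$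
   Context: $\mathcal P(\Omega)$ is the manifold of strictly positive probability distributions on a finite set $\Omega$. The Fisher co-metric is the inner product on $T^*_p(\mathcal P(\Omega))$ with $g_p((d\langle A\rangle)_p,(d\langle B\rangle)_p)=\mathrm{Cov}_p(A,B)$ for $A,B\in\mathbb R^\Omega$, where $\langle A\rangle(p)=\sum_\omega p(\omega)A(\omega)$ (every covector is of this form). A Markov map $\mathcal P(\Omega_1)\to\mathcal P(\Omega_2)$ is a map $p\mapsto\sum_xW(\cdot|x)p(x)$ for a channel $W$ with $\forall y\,\exists x\,W(y|x)>0$. A Markov map $\Phi:\mathcal P_m\to\mathcal P_n$ is a Markov embedding if some Markov map $\Psi:\mathcal P_n\to\mathcal P_m$ satisfies $\Psi\circ\Phi=\mathrm{id}_{\mathcal P_m}$; a Markov map $\Psi$ admitting such a $\Phi$ is a Markov co-embedding. $\Psi^*_q$ is the transpose of $(d\Psi)_q$. *)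

From mathcomp Require Import all_boot all_order all_algebra.
From mathcomp Require Export reals.
Set Implicit Arguments. Unset Strict Implicit. Unset Printing Implicit Defensive.
Import Order.TTheory GRing.Theory Num.Theory.
Local Open Scope ring_scope.

Section Defs.
Variable R : realType.

Definition posdist (n : nat) (p : 'I_n -> R) : Prop :=
  (forall i, 0 < p i) /\ \sum_(i < n) p i = 1.

Definition expect (n : nat) (p A : 'I_n -> R) : R := \sum_(i < n) p i * A i.

(* Fisher co-metric: g_p(d<A>, d<B>) = Cov_p(A,B) *)
Definition fisher_cometric (n : nat) (p A B : 'I_n -> R) : R :=
  expect p (fun i => A i * B i) - expect p A * expect p B.

(* A channel from 'I_n to 'I_m : W y x = W(y|x), with the Markov-map
   condition forall y, exists x, W(y|x) > 0. *)
Definition markov_channel (n m : nat) (W : 'I_m -> 'I_n -> R) : Prop :=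
  (forall y x, 0 <= W y x) /\
  (forall x, \sum_(y < m) W y x = 1) /\
  (forall y, exists x, 0 < W y x).

Definition markov_map (n m : nat) (W : 'I_m -> 'I_n -> R) (p : 'I_n -> R)
  : 'I_m -> R := fun y => \sum_(x < n) W y x * p x.

(* Pullback of covectors: Psi^*_q (d<A>)_{Psi q} = (d<A'>)_q with
   A'(x) = sum_y W(y|x) A(y) (independent of q). *)
Definition pullback (n m : nat) (W : 'I_m -> 'I_n -> R) (A : 'I_m -> R)
  : 'I_n -> R := fun x => \sum_(y < m) W y x * A y.

Definition markov_coembedding (n m : nat) (W : 'I_m -> 'I_n -> R) : Prop :=
  markov_channel W /\
  exists V : 'I_n -> 'I_m -> R, markov_channel V /\
    forall p : 'I_m -> R, posdist p -> markov_map W (markov_map V p) = p.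

(* A contravariant 2-tensor field on P_n, given as
   h : (point p) -> (A : R^n) -> (B : R^n) -> R, meaning
   h_p((d<A>)_p, (d<B>)_p).  Since every covector is (d<A>)_p and
   (d<A>)_p = (d<A'>)_p iff A - A' is constant, a bilinear form on T^*_p
   is the same as a bilinear form on R^n vanishing on constants in each
   argument. *)
Definition cotangent_bilinear (n : nat) (b : ('I_n -> R) -> ('I_n -> R) -> R)
  : Prop :=
  (forall a A A' B, b (fun i => a * A i + A' i) B = a * b A B + b A' B) /\
  (forall a A B B', b A (fun i => a * B i + B' i) = a * b A B + b A B') /\
  (forall c B, b (fun _ => c) B = 0) /\
  (forall c A, b A (fun _ => c) = 0).

(* continuity of p |-> h_p on P_n (entrywise, equivalently in the
   finite-dimensional space of bilinear forms) *)
Definition tensor_field_continuous (n : nat)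
  (h : ('I_n -> R) -> ('I_n -> R) -> ('I_n -> R) -> R) : Prop :=
  forall A B p, posdist p -> forall eps : R, 0 < eps ->
    exists2 delta : R, 0 < delta &
      forall q, posdist q -> (forall i, `|q i - p i| < delta) ->
        `|h q A B - h p A B| < eps.

Definition contravariant_2tensor_field (n : nat)
  (h : ('I_n -> R) -> ('I_n -> R) -> ('I_n -> R) -> R) : Prop :=
  (forall p, posdist p -> cotangent_bilinear (h p)) /\
  tensor_field_continuous h.

End Defs.

From mathcomp Require Import all_boot all_order all_algebra perm.
From Stdlib Require Import FunctionalExtensionality.
From mathcomp Require Import ring lra zify.
Import Order.TTheory GRing.Theory Num.Theory.
Set Implicit Arguments. Unset Strict Implicit. Unset Printing Implicit Defensive.
Local Open Scope ring_scope.

(* At the uniform distribution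
   on N points every permutation acts as a co-embedding, so h is given by a
   permutation-invariant Gram matrix that kills constants, i.e. by a multiple
   c_N of the Fisher co-metric.  A rational point with weights k and total K
   is the image of the uniform distribution on K points under a surjection
   with fibres of sizes k; pushing the uniform distribution on 2K points both
   onto the uniform distribution on 2 points and onto the point with weights
   2k shows that h is c_2 times the Fisher co-metric at every rational point.
   These are dense, and both sides are continuous.  Conversely, co-embeddings
   are deterministic, and pulling back along a map preserves covariances. *)

Lemma exists_fibration n (k : 'I_n -> nat) K :
  \sum_i k i = K -> exists f : 'I_K -> 'I_n, forall y, #|[pred x | f x == y]| = k y.
Proof.
(* 'I_K enumerates the disjoint union of the blocks 'I_(k i). *)
pose T : finType := {i : 'I_n & 'I_(k i)}.
have card_tag (P : pred 'I_n) : #|[pred t : T | P (tag t)]| = \sum_(i | P i) k i.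
  rewrite -sum1_card -(eq_bigr _ (fun i _ => card_ord (k i))).
  under [RHS]eq_bigr do rewrite -sum1_card.
  rewrite (sig_big_dep P (fun _ _ => true) (fun _ _ => 1%N)).
  by apply: eq_bigl => t; rewrite !inE andbT.
have card_T : #|T| = \sum_i k i.
  by rewrite -(card_tag xpredT); apply: eq_card => t; rewrite !inE.
move=> <-; rewrite -card_T; exists (fun x => tag (enum_val x)) => y.
rewrite -(big_pred1_eq addn y k) -card_tag.
apply: etrans (on_card_preimset (onW_bij _ (enum_val_bij T))).
by apply: eq_card => x; rewrite !inE.
Qed.

Section Channels.
Context {R : realType}.

Lemma sum_delta_mulr (I : finType) (i : I) (F : I -> R) :
  \sum_j (i == j)%:R * F j = F i.
Proof.
rewrite (bigD1 i) //= eqxx mul1r big1 ?addr0 // => j.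
by rewrite eq_sym => /negbTE ->; rewrite mul0r.
Qed.

Lemma sum_delta_mull (I : finType) (i : I) (F : I -> R) :
  \sum_j (j == i)%:R * F j = F i.
Proof. by rewrite -(sum_delta_mulr i); apply: eq_bigr => j _; rewrite eq_sym. Qed.

Definition indicator n (i : 'I_n) : 'I_n -> R := fun x => (x == i)%:R.

Definition uniform n : 'I_n -> R := fun _ => n%:R^-1.
#[global] Arguments uniform : clear implicits.

Definition ratdist n (k : 'I_n -> nat) : 'I_n -> R :=
  fun i => (k i)%:R / (\sum_j k j)%:R.

Definition det_channel n m (f : 'I_n -> 'I_m) : 'I_m -> 'I_n -> R :=
  fun y x => (f x == y)%:R.

Lemma sum_indicator n (i : 'I_n) : \sum_x indicator i x = 1.
Proof. by rewrite -(sum_delta_mull i (fun=> 1)); apply: eq_bigr => x _; rewrite mulr1. Qed.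

Lemma indicator_expand n (A : 'I_n -> R) : (fun x => \sum_i A i * indicator i x) = A.
Proof.
apply: functional_extensionality => x; rewrite -(sum_delta_mulr x A).
by apply: eq_bigr => i _; rewrite mulrC.
Qed.

Lemma cotangent_bilinear_suml n (b : ('I_n -> R) -> ('I_n -> R) -> R)
    (I : Type) (s : seq I) (a : I -> R) (F : I -> 'I_n -> R) B :
  cotangent_bilinear b ->
  b (fun x => \sum_(i <- s) a i * F i x) B = \sum_(i <- s) a i * b (F i) B.
Proof.
case=> [b_linl [_ [b_constl _]]]; elim: s => [|i s IH].
  rewrite big_nil -(b_constl 0 B); congr b.
  by apply: functional_extensionality => x; rewrite big_nil.
rewrite big_cons -IH -b_linl; congr b.
by apply: functional_extensionality => x; rewrite big_cons.
Qed.

Lemma cotangent_bilinear_sumr n (b : ('I_n -> R) -> ('I_n -> R) -> R)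
    (I : Type) (s : seq I) (a : I -> R) (F : I -> 'I_n -> R) A :
  cotangent_bilinear b ->
  b A (fun x => \sum_(i <- s) a i * F i x) = \sum_(i <- s) a i * b A (F i).
Proof.
case=> [_ [b_linr [_ b_constr]]]; elim: s => [|i s IH].
  rewrite big_nil -(b_constr 0 A); congr b.
  by apply: functional_extensionality => x; rewrite big_nil.
rewrite big_cons -IH -b_linr; congr b.
by apply: functional_extensionality => x; rewrite big_cons.
Qed.

Lemma cotangent_bilinear_expand n (b : ('I_n -> R) -> ('I_n -> R) -> R) A B :
  cotangent_bilinear b ->
  b A B = \sum_i \sum_j A i * B j * b (indicator i) (indicator j).
Proof.
move=> b_bil; rewrite -{1}[A]indicator_expand cotangent_bilinear_suml //.
apply: eq_bigr => i _; rewrite -{1}[B]indicator_expand cotangent_bilinear_sumr // mulr_sumr.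
by apply: eq_bigr => j _; rewrite mulrA.
Qed.

Lemma posdist_le1 n (p : 'I_n -> R) i : posdist p -> p i <= 1.
Proof.
move=> [p_gt0 <-]; rewrite (bigD1 i) //= lerDl.
by apply: sumr_ge0 => j _; apply: ltW.
Qed.

Lemma posdist_gt0 n (p : 'I_n -> R) : posdist p -> (0 < n)%N.
Proof. by case: n p => // p [_]; rewrite big_ord0 => /eqP; rewrite eq_sym oner_eq0. Qed.

Lemma uniform_posdist n : (0 < n)%N -> posdist (uniform n).
Proof.
move=> n_gt0; split=> [i|]; first by rewrite invr_gt0 ltr0n.
by rewrite sumr_const card_ord -[_ *+ n]mulr_natr mulVf // pnatr_eq0 -lt0n.
Qed.

Lemma ratdist_posdist n (k : 'I_n -> nat) :
  (0 < n)%N -> (forall i, 0 < k i)%N -> posdist (ratdist k).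
Proof.
move=> n_gt0 k_gt0; have sum_gt0 : (0 < \sum_j k j)%N.
  by rewrite (bigD1 (Ordinal n_gt0)) //= addn_gt0 k_gt0.
split=> [i|]; first by rewrite divr_gt0 ?ltr0n.
by rewrite -mulr_suml -natr_sum mulfV // pnatr_eq0 -lt0n.
Qed.

Lemma markov_map_posdist n m (W : 'I_m -> 'I_n -> R) q :
  markov_channel W -> posdist q -> posdist (markov_map W q).
Proof.
move=> [W_ge0 [W_sum1 W_pos]] [q_gt0 q_sum1]; split=> [y|].
  have [x Wyx_gt0] := W_pos y; rewrite /markov_map (bigD1 x) //=.
  apply: ltr_pwDl; first exact: mulr_gt0.
  by apply: sumr_ge0 => i _; rewrite mulr_ge0 // ltW.
rewrite /markov_map exchange_big -q_sum1 /=.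
by apply: eq_bigr => x _; rewrite -mulr_suml W_sum1 mul1r.
Qed.

Lemma markov_map_linear n m (W : 'I_m -> 'I_n -> R) a b p r :
  markov_map W (fun i => a * p i + b * r i) =
  (fun y => a * markov_map W p y + b * markov_map W r y).
Proof.
apply: functional_extensionality => y; rewrite /markov_map !mulr_sumr -big_split.
by apply: eq_bigr => x _; rewrite mulrDr (mulrCA _ a) (mulrCA _ b).
Qed.

Lemma expect_pullback n m (W : 'I_m -> 'I_n -> R) q C :
  expect q (pullback W C) = expect (markov_map W q) C.
Proof.
rewrite /expect /pullback /markov_map; under eq_bigr do rewrite mulr_sumr.
rewrite exchange_big /=; apply: eq_bigr => y _; rewrite mulr_suml.
by apply: eq_bigr => x _; rewrite mulrCA mulrA.
Qed.

Lemma pullback_det_channel n m (f : 'I_n -> 'I_m) A :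
  pullback (det_channel f) A = A \o f.
Proof. by apply: functional_extensionality => x; rewrite /pullback sum_delta_mulr. Qed.

Lemma markov_map_det_channel n m (f : 'I_n -> 'I_m) q y :
  markov_map (det_channel f) q y = \sum_(x | f x == y) q x.
Proof.
rewrite /markov_map [RHS]big_mkcond; apply: eq_bigr => x _.
by rewrite /det_channel; case: (f x == y); rewrite ?(mul1r, mul0r).
Qed.

Lemma sum_fiber_const n m (f : 'I_n -> 'I_m) y (a : R) :
  \sum_(x | f x == y) a = a *+ #|[pred x | f x == y]|.
Proof. by rewrite -sumr_const; apply: eq_bigl => x; rewrite inE. Qed.

Lemma fisher_cometric_det_channel n m (f : 'I_n -> 'I_m) q A B :
  fisher_cometric q (A \o f) (B \o f) =
  fisher_cometric (markov_map (det_channel f) q) A B.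
Proof. by rewrite /fisher_cometric -!expect_pullback !pullback_det_channel. Qed.

Lemma det_channel_coembedding n m (f : 'I_n -> 'I_m) :
  (forall y, exists x, f x = y) -> markov_coembedding (det_channel f).
Proof.
move=> f_surj; have fiber_gt0 y : (0 < #|[pred x | f x == y]|)%N.
  by have [x fx] := f_surj y; apply/card_gt0P; exists x; rewrite inE fx.
pose c y : R := #|[pred x | f x == y]|%:R.
have c_gt0 y : 0 < c y by rewrite ltr0n.
have sum_fiber y : \sum_x (f x == y)%:R = c y.
  rewrite -[c y]/(1 *+ _) -sum_fiber_const [RHS]big_mkcond.
  by apply: eq_bigr => x _; case: eqP.
split; first split=> [y x|]; first by rewrite ler0n.
  split=> [x|y].
    by rewrite /det_channel; under eq_bigr do rewrite eq_sym; apply: sum_indicator.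
  by have [x fx] := f_surj y; exists x; rewrite /det_channel fx eqxx ltr01.
exists (fun x y => (f x == y)%:R / c y); split; first split=> [x y|].
- by rewrite divr_ge0 ?ler0n // ltW.
- split=> [y|x]; last by exists (f x); rewrite eqxx mul1r invr_gt0.
  by rewrite -mulr_suml sum_fiber mulfV // gt_eqF.
move=> p _; apply: functional_extensionality => y.
rewrite markov_map_det_channel.
transitivity (\sum_(x | f x == y) p y / c y).
  apply: eq_bigr => x /eqP <-; rewrite /markov_map (bigD1 (f x)) //= eqxx mul1r.
  by rewrite mulrC big1 ?addr0 // => y' /negbTE; rewrite eq_sym => ->; rewrite !mul0r.
by rewrite sum_fiber_const -mulr_natr divfK // gt_eqF.
Qed.

Lemma markov_map_perm_uniform N (s : {perm 'I_N}) :
  markov_map (det_channel s) (uniform N) = uniform N :> ('I_N -> R).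
Proof.
apply: functional_extensionality => y; rewrite markov_map_det_channel.
by rewrite (big_pred1 ((s^-1)%g y)) // => x; rewrite /= (can2_eq (permK s) (permKV s)).
Qed.

Lemma uniform_pushforward_ratdist n (k : 'I_n -> nat) K :
  \sum_i k i = K -> (forall i, 0 < k i)%N ->
  exists2 f : 'I_K -> 'I_n, (forall y, exists x, f x = y) &
    markov_map (det_channel f) (uniform K) = ratdist k.
Proof.
move=> sum_k k_gt0; have [f f_fiber] := exists_fibration sum_k; exists f.
  move=> y; have /card_gt0P [x] : (0 < #|[pred x | f x == y]|)%N by rewrite f_fiber.
  by rewrite inE => /eqP; exists x.
apply: functional_extensionality => y.
by rewrite markov_map_det_channel sum_fiber_const f_fiber /ratdist sum_k -[_ *+ k y]mulr_natl.
Qed.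

Lemma coembedding_right_inverse n m (W : 'I_m -> 'I_n -> R) :
  (0 < m)%N -> markov_coembedding W ->
  exists2 V : 'I_n -> 'I_m -> R, markov_channel V &
    forall y0 y, \sum_x W y x * V x y0 = (y == y0)%:R.
Proof.
move=> m_gt0 [_ [V [V_channel WV_id]]]; exists V => // y0 y.
(* W o V fixes the interior of the simplex, hence by linearity the vertex
   [indicator y0 = 2 mix - u]. *)
pose u := uniform m; pose mix i := 2^-1 * u i + 2^-1 * indicator y0 i.
have u_pos : posdist u by apply: uniform_posdist.
have mix_pos : posdist mix.
  have [u_gt0 u_sum1] := u_pos; split=> [i|].
    apply: ltr_pwDl; first by rewrite mulr_gt0 ?invr_gt0 ?ltr0n.
    by rewrite mulr_ge0 ?invr_ge0 ?ler0n.
  by rewrite big_split /= -!mulr_sumr u_sum1 sum_indicator; lra.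
have indicator_mix : indicator y0 = (fun i => 2 * mix i + (-1) * u i).
  apply: functional_extensionality => i; rewrite /mix mulrDr !mulrA mulfV ?pnatr_eq0 //.
  by rewrite !mul1r mulN1r addrAC subrr add0r.
have -> : \sum_x W y x * V x y0 = markov_map W (markov_map V (indicator y0)) y.
  by apply: eq_bigr => x _; rewrite -(sum_delta_mull y0 (V x)); congr (_ * _);
    apply: eq_bigr => z _; rewrite mulrC.
suff -> : markov_map W (markov_map V (indicator y0)) = indicator y0 by [].
clearbody u mix; rewrite {1}indicator_mix !markov_map_linear.
by rewrite (WV_id _ mix_pos) (WV_id _ u_pos) indicator_mix.
Qed.

Lemma coembedding_det_channel n m (W : 'I_m -> 'I_n -> R) :
  (0 < m)%N -> markov_coembedding W -> exists f : 'I_n -> 'I_m, W = det_channel f.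
Proof.
move=> m_gt0 W_coemb; have [[W_ge0 [W_sum1 _]] _] := W_coemb.
have [V [V_ge0 [_ V_pos]] WV_id] := coembedding_right_inverse m_gt0 W_coemb.
suff /fin_all_exists [f Wf] : forall x, exists y0, forall y, W y x = (y0 == y)%:R.
  by exists f; do 2!apply: functional_extensionality => ?; rewrite Wf.
move=> x; have [y0 Vxy0_gt0] := V_pos x; exists y0.
have W_off : forall y, y0 != y -> W y x = 0.
  move=> y /negbTE y0Ny; have := WV_id y0 y; rewrite eq_sym y0Ny => /psumr_eq0P WV0.
  have /eqP := WV0 (fun x' _ => mulr_ge0 (W_ge0 y x') (V_ge0 x' y0)) x isT.
  by rewrite mulf_eq0 (gt_eqF Vxy0_gt0) orbF => /eqP.
move=> y; have [<-|/W_off -> //] := eqVneq y0 y.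
have := W_sum1 x; rewrite (bigD1 y0) //= big1 ?addr0 => [-> //|y'].
by rewrite eq_sym => /W_off.
Qed.

Lemma fisher_cometric_coembedding n m (W : 'I_m -> 'I_n -> R) q A B :
  (0 < m)%N -> markov_coembedding W ->
  fisher_cometric (markov_map W q) A B =
  fisher_cometric q (pullback W A) (pullback W B).
Proof.
move=> m_gt0 /(coembedding_det_channel m_gt0) [f ->].
by rewrite !pullback_det_channel fisher_cometric_det_channel.
Qed.

Lemma fisher_cometric_uniform_indicator N (i : 'I_N) :
  fisher_cometric (uniform N) (indicator i) (indicator i) = (N%:R - 1) / N%:R ^+ 2 :> R.
Proof.
have N_neq0 : N%:R != 0 :> R by rewrite pnatr_eq0 -lt0n (leq_ltn_trans _ (ltn_ord i)).
rewrite /fisher_cometric /expect /uniform -!mulr_sumr.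
under eq_bigr do rewrite /indicator -natrM mulnb andbb.
by rewrite sum_indicator; field.
Qed.

End Channels.

Section Continuity.
Context {R : realType}.

Definition simplex_continuous n (F : ('I_n -> R) -> R) : Prop :=
  forall p, posdist p -> forall eps : R, 0 < eps ->
    exists2 delta : R, 0 < delta &
      forall q, posdist q -> (forall i, `|q i - p i| < delta) -> `|F q - F p| < eps.

Lemma expect_lipschitz n (p q C : 'I_n -> R) eta :
  (forall i, `|q i - p i| <= eta) -> `|expect q C - expect p C| <= eta * \sum_i `|C i|.
Proof.
move=> pq_close; rewrite /expect -sumrB mulr_sumr.
apply: le_trans (ler_norm_sum _ _ _) _; apply: ler_sum => i _.
by rewrite -mulrBl normrM ler_wpM2r.
Qed.

Lemma norm_expect_le n (q C : 'I_n -> R) :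
  posdist q -> `|expect q C| <= \sum_i `|C i|.
Proof.
move=> q_pos; apply: le_trans (ler_norm_sum _ _ _) _; apply: ler_sum => i _.
rewrite normrM -[leRHS]mul1r ler_wpM2r // ger0_norm ?posdist_le1 //.
by case: q_pos => /(_ i) /ltW.
Qed.

Lemma fisher_cometric_lipschitz n (p q A B : 'I_n -> R) eta :
  posdist p -> posdist q -> (forall i, `|q i - p i| <= eta) ->
  `|fisher_cometric q A B - fisher_cometric p A B| <=
    eta * (\sum_i `|A i * B i| + 2 * ((\sum_i `|A i|) * \sum_i `|B i|)).
Proof.
move=> p_pos q_pos pq_close.
have eta_ge0 : 0 <= eta by apply: le_trans (pq_close (Ordinal (posdist_gt0 p_pos))).
set eA := expect q A - expect p A; set eB := expect q B - expect p B.
have -> : fisher_cometric q A B - fisher_cometric p A B =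
    (expect q (fun i => A i * B i) - expect p (fun i => A i * B i)) -
    (eA * expect q B + expect p A * eB) by rewrite /fisher_cometric /eA /eB; ring.
have dAB := expect_lipschitz (fun i => A i * B i) pq_close.
have dA : `|eA * expect q B| <= eta * (\sum_i `|A i|) * \sum_i `|B i|.
  by rewrite normrM ler_pM ?expect_lipschitz ?norm_expect_le.
have dB : `|expect p A * eB| <= (\sum_i `|A i|) * (eta * \sum_i `|B i|).
  by rewrite normrM ler_pM ?expect_lipschitz ?norm_expect_le.
have := ler_normB (expect q (fun i => A i * B i) - expect p (fun i => A i * B i))
  (eA * expect q B + expect p A * eB).
have := ler_normD (eA * expect q B) (expect p A * eB).
nra.
Qed.

Lemma fisher_cometric_continuous n (c : R) (A B : 'I_n -> R) :
  simplex_continuous (fun q => c * fisher_cometric q A B).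
Proof.
move=> p p_pos eps eps_gt0.
pose M : R := \sum_i `|A i * B i| + 2 * ((\sum_i `|A i|) * \sum_i `|B i|).
have M_ge0 : 0 <= M by rewrite addr_ge0 ?sumr_ge0 ?mulr_ge0 ?sumr_ge0.
have cM_gt0 : 0 < `|c| * M + 1 by rewrite ltr_wpDl ?mulr_ge0.
exists (eps / (`|c| * M + 1)) => [|q q_pos pq_close]; first by rewrite divr_gt0.
have := fisher_cometric_lipschitz A B p_pos q_pos (fun i => ltW (pq_close i)).
rewrite -/M -mulrBr normrM => lip.
apply: le_lt_trans (ler_wpM2l (normr_ge0 c) lip) _.
have d_gt0 : 0 < eps / (`|c| * M + 1) by rewrite divr_gt0.
have := divfK (lt0r_neq0 cM_gt0) eps; nra.
Qed.

Lemma ratdist_dense n (p : 'I_n -> R) eta : posdist p -> 0 < eta ->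
  exists2 k : 'I_n -> nat, (forall i, 0 < k i)%N & forall i, `|ratdist k i - p i| < eta.
Proof.
move=> p_pos eta_gt0; have [p_gt0 p_sum1] := p_pos.
pose K := (Num.truncn (n%:R / eta)).+1.
have n_lt_etaK : n%:R < eta * K%:R.
  by have := truncnS_gt (n%:R / eta); rewrite ltr_pdivrMr // mulrC.
pose k i := (Num.truncn (p i * K%:R)).+1.
have k_lb j : p j * K%:R < (k j)%:R by apply: truncnS_gt.
have k_ub j : (k j)%:R <= p j * K%:R + 1.
  by rewrite -natr1 lerD2r truncn_le mulr_ge0 ?ler0n ?ltW.
exists k => // i; set S : R := (\sum_j k j)%:R.
have pK_sum : \sum_j p j * K%:R = K%:R by rewrite -mulr_suml p_sum1 mul1r.
have S_lb : K%:R <= S.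
  by rewrite /S natr_sum -pK_sum; apply: ler_sum => j _; apply: ltW.
have S_ub : S <= K%:R + n%:R.
  rewrite /S natr_sum -pK_sum; apply: (le_trans (ler_sum _ (fun j _ => k_ub j))).
  by rewrite big_split /= sumr_const card_ord.
have n_ge1 : 1 <= n%:R :> R by rewrite ler1n (leq_ltn_trans _ (ltn_ord i)).
have pi_le1 := posdist_le1 i p_pos; have pi_gt0 := p_gt0 i.
have K_gt0 : 0 < K%:R :> R by rewrite ltr0n.
have S_gt0 : 0 < S by apply: lt_le_trans S_lb.
(* k i lies in (p i K, p i K + 1] and S in [K, K + n]. *)
have num_bound : `|(k i)%:R - p i * S| <= n%:R.
  have := k_lb i; have := k_ub i; rewrite ler_norml; nra.
have -> : ratdist k i - p i = ((k i)%:R - p i * S) / S.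
  by rewrite /ratdist -/S; field; rewrite gt_eqF.
rewrite normrM [`|S^-1|]gtr0_norm ?invr_gt0 // ltr_pdivrMr //.
apply: (le_lt_trans num_bound (lt_le_trans n_lt_etaK _)).
by apply: ler_wpM2l => //; apply: ltW.
Qed.

Lemma simplex_continuous_eq n (F G : ('I_n -> R) -> R) p :
  simplex_continuous F -> simplex_continuous G ->
  (forall k : 'I_n -> nat, (forall i, 0 < k i)%N -> F (ratdist k) = G (ratdist k)) ->
  posdist p -> F p = G p.
Proof.
move=> F_cont G_cont FG_ratdist p_pos; apply/eqP; rewrite -subr_eq0; apply: contraT => FG_neq.
pose eps := `|F p - G p| / 2; have eps_gt0 : 0 < eps by rewrite divr_gt0 ?normr_gt0.
have [dF dF_gt0 F_close] := F_cont p p_pos eps eps_gt0.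
have [dG dG_gt0 G_close] := G_cont p p_pos eps eps_gt0.
have [k k_gt0 k_close] : exists2 k : 'I_n -> nat, (forall i, 0 < k i)%N &
    forall i, `|ratdist k i - p i| < Num.min dF dG.
  by apply: ratdist_dense; rewrite // lt_min dF_gt0.
have q_pos := ratdist_posdist (R := R) (posdist_gt0 p_pos) k_gt0.
have /(F_close _ q_pos) : forall i, `|ratdist k i - p i| < dF.
  by move=> i; have := k_close i; rewrite lt_min => /andP[].
have /(G_close _ q_pos) : forall i, `|ratdist k i - p i| < dG.
  by move=> i; have := k_close i; rewrite lt_min => /andP[].
have := ler_normB (G (ratdist k) - G p) (G (ratdist k) - F p).
rewrite FG_ratdist // (_ : _ - _ - _ = F p - G p) /eps; last by ring.
move=> triangle close_G close_F.
suff : `|F p - G p| < `|F p - G p| by rewrite ltxx.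
lra.
Qed.

End Continuity.

Section Characterization.
Context {R : realType}.
Variable h : forall n : nat, ('I_n -> R) -> ('I_n -> R) -> ('I_n -> R) -> R.
Arguments h : clear implicits.
Hypothesis h_tensor : forall n, (2 <= n)%N -> contravariant_2tensor_field (h n).
Hypothesis h_invariant :
  forall m n : nat, (2 <= m)%N -> (m <= n)%N ->
  forall W : 'I_m -> 'I_n -> R, markov_coembedding W ->
  forall q : 'I_n -> R, posdist q ->
  forall A B : 'I_m -> R,
    h m (markov_map W q) A B = h n q (pullback W A) (pullback W B).

Definition fisher_multiple n (c : R) (q : 'I_n -> R) :=
  forall A B, h n q A B = c * fisher_cometric q A B.

Lemma h_pushforward m n (f : 'I_n -> 'I_m) q A B :
  (2 <= m)%N -> (m <= n)%N -> (forall y, exists x, f x = y) -> posdist q ->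
  h m (markov_map (det_channel f) q) A B = h n q (A \o f) (B \o f).
Proof.
move=> m_ge2 m_le_n f_surj q_pos.
rewrite h_invariant ?pullback_det_channel //; exact: det_channel_coembedding.
Qed.

Lemma fisher_multiple_pushforward m n (f : 'I_n -> 'I_m) c q :
  (2 <= m)%N -> (m <= n)%N -> (forall y, exists x, f x = y) -> posdist q ->
  fisher_multiple c q -> fisher_multiple c (markov_map (det_channel f) q).
Proof.
move=> m_ge2 m_le_n f_surj q_pos hq A B.
by rewrite h_pushforward // hq fisher_cometric_det_channel.
Qed.

Lemma h_uniform_perm N (s : {perm 'I_N}) A B : (2 <= N)%N ->
  h N (uniform N) (A \o s) (B \o s) = h N (uniform N) A B.
Proof.
move=> N_ge2; have u_pos := uniform_posdist (R := R) (ltnW N_ge2).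
have s_surj y : exists x, s x = y by exists ((s^-1)%g y); rewrite permKV.
by rewrite -h_pushforward ?markov_map_perm_uniform.
Qed.

Lemma h_uniform_indicator N : (2 <= N)%N ->
  exists d, forall i j : 'I_N,
    h N (uniform N) (indicator i) (indicator j) = d * ((i == j)%:R - N%:R^-1).
Proof.
(* Transpositions make the Gram matrix H constant on and off the diagonal;
   its rows vanish because h kills constants. *)
move=> N_ge2; pose i0 : 'I_N := Ordinal (ltnW N_ge2).
pose H i j := h N (uniform N) (indicator i) (indicator j).
have [bil _] := h_tensor N_ge2.
have H_bil := bil _ (uniform_posdist (ltnW N_ge2)).
have H_perm (s : {perm 'I_N}) i j : H (s i) (s j) = H i j.
  rewrite /H -(h_uniform_perm s) //; congr h;
  by apply: functional_extensionality => x; rewrite /indicator /= (inj_eq perm_inj).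
have H_diag i : H i i = H i0 i0 by rewrite -(H_perm (tperm i0 i) i0 i0) tpermL.
have H_off i j k : j != i -> k != i -> H i k = H i j.
  by move=> ji ki; rewrite -(H_perm (tperm j k) i j) tpermL tpermD.
have H_row i : \sum_j H i j = 0.
  have [_ [_ [_ const_r]]] := H_bil.
  rewrite -[RHS](const_r 1 (indicator i)) -(indicator_expand (fun=> 1)).
  by rewrite cotangent_bilinear_sumr //; under [RHS]eq_bigr do rewrite mul1r.
have N_neq0 : N%:R != 0 :> R by rewrite pnatr_eq0 -lt0n ltnW.
have N1_neq0 : N%:R - 1 != 0 :> R by rewrite subr_eq0 pnatr_eq1 gtn_eqF.
exists (H i0 i0 * N%:R / (N%:R - 1)) => i j; rewrite -/(H i j).
have [<-|ij] := eqVneq i j; first by rewrite H_diag mulr1n; field; apply/andP.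
suff H_ij : H i j * (N%:R - 1) = - H i0 i0.
  by apply: (mulIf N1_neq0); rewrite H_ij mulr0n; field; apply/andP.
have := H_row i; rewrite (bigD1 i) //= H_diag (eq_bigr (fun=> H i j)) => [|k ki]; last first.
  by apply: H_off; rewrite // eq_sym.
rewrite sumr_const cardC1 card_ord -[_ *+ N.-1]mulr_natr -subn1 natrB ?(ltnW N_ge2) //.
by move=> /eqP; rewrite addrC addr_eq0 => /eqP.
Qed.

Lemma fisher_multiple_uniform N : (2 <= N)%N -> exists c, fisher_multiple c (uniform N).
Proof.
move=> N_ge2; have [d h_indicator] := h_uniform_indicator N_ge2.
have [bil _] := h_tensor N_ge2.
have N_neq0 : N%:R != 0 :> R by rewrite pnatr_eq0 -lt0n ltnW.
exists (d * N%:R) => A B.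
rewrite (cotangent_bilinear_expand _ _ (bil _ (uniform_posdist (ltnW N_ge2)))).
under eq_bigr do under eq_bigr do rewrite h_indicator.
transitivity (d * \sum_i A i * B i - d / N%:R * ((\sum_i A i) * \sum_j B j)).
  rewrite mulr_suml !mulr_sumr -sumrB; apply: eq_bigr => i _.
  rewrite -[d * (A i * B i)](sum_delta_mulr i (fun j => d * (A i * B j))).
  rewrite [A i * \sum_j B j]mulr_sumr mulr_sumr -sumrB.
  by apply: eq_bigr => j _; ring.
rewrite /fisher_cometric /expect /uniform -!mulr_sumr; field; exact: N_neq0.
Qed.

Lemma fisher_multiple_uniform_uniq N c c' : (2 <= N)%N ->
  fisher_multiple c (uniform N) -> fisher_multiple c' (uniform N) -> c = c'.
Proof.
move=> N_ge2 hc hc'; pose i0 : 'I_N := Ordinal (ltnW N_ge2).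
apply: (mulIf (x := fisher_cometric (uniform N) (indicator i0) (indicator i0))).
  rewrite fisher_cometric_uniform_indicator mulf_neq0 ?invr_eq0 ?expf_neq0 //.
    by rewrite subr_eq0 pnatr_eq1 gtn_eqF.
  by rewrite pnatr_eq0 -lt0n ltnW.
by rewrite -hc -hc'.
Qed.

Lemma fisher_multiple_ratdist n (k : 'I_n -> nat) c :
  (2 <= n)%N -> (forall i, 0 < k i)%N ->
  fisher_multiple c (uniform 2) -> fisher_multiple c (ratdist k).
Proof.
move=> n_ge2 k_gt0 hc; set K := \sum_i k i.
have n_le_K : (n <= K)%N by rewrite -[n]card_ord -sum1_card leq_sum.
have K_gt0 : (0 < K)%N by lia.
have K_neq0 : K%:R != 0 :> R by rewrite pnatr_eq0 -lt0n.
have K2_ge2 : (2 <= 2 * K)%N by lia.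
have u_pos := uniform_posdist (R := R) (ltnW K2_ge2).
have [c' hc'] := fisher_multiple_uniform K2_ge2.
have <- : c' = c.
  have sum_const : (\sum_(i < 2) K = 2 * K)%N by rewrite sum_nat_const card_ord.
  have [f f_surj f_push] := uniform_pushforward_ratdist (R := R) sum_const (fun=> K_gt0).
  have ratdist_const : ratdist (fun _ : 'I_2 => K) = uniform 2 :> ('I_2 -> R).
    apply: functional_extensionality => i.
    by rewrite /ratdist /uniform sum_nat_const card_ord natrM; field.
  apply: (fisher_multiple_uniform_uniq (N := 2)) => //.
  by rewrite -ratdist_const -f_push; apply: fisher_multiple_pushforward.
have sum_double : (\sum_i 2 * k i = 2 * K)%N by rewrite -big_distrr.
have k2_gt0 i : (0 < 2 * k i)%N by rewrite muln_gt0 k_gt0.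
have [f f_surj f_push] := uniform_pushforward_ratdist (R := R) sum_double k2_gt0.
have <- : ratdist (fun i => (2 * k i)%N) = ratdist k :> ('I_n -> R).
  apply: functional_extensionality => i.
  by rewrite /ratdist -big_distrr !natrM -/K; field.
by rewrite -f_push; apply: fisher_multiple_pushforward => //; lia.
Qed.

Lemma invariant_fisher_multiple :
  exists c : R, forall n, (2 <= n)%N -> forall p : 'I_n -> R, posdist p ->
    forall A B, h n p A B = c * fisher_cometric p A B.
Proof.
have [c hc] := fisher_multiple_uniform (leqnn 2).
exists c => n n_ge2 p p_pos A B; have [_ h_cont] := h_tensor n_ge2.
apply: (simplex_continuous_eq (F := fun q => h n q A B)
  (G := fun q => c * fisher_cometric q A B) _ _ _ p_pos) => [||k k_gt0].
- exact: h_cont.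
- exact: fisher_cometric_continuous.
- exact: fisher_multiple_ratdist.
Qed.

End Characterization.

Theorem mainTheorem8 (R : realType)
  (h : forall n : nat, ('I_n -> R) -> ('I_n -> R) -> ('I_n -> R) -> R)
  (Hh : forall n : nat, (2 <= n)%N -> contravariant_2tensor_field (h n)) :
  (exists c : R, forall n : nat, (2 <= n)%N ->
     forall p : 'I_n -> R, posdist p ->
     forall A B : 'I_n -> R, h n p A B = c * fisher_cometric p A B)
  <->
  (forall m n : nat, (2 <= m)%N -> (m <= n)%N ->
     forall W : 'I_m -> 'I_n -> R, markov_coembedding W ->
     forall q : 'I_n -> R, posdist q ->
     forall A B : 'I_m -> R,
       h m (markov_map W q) A B = h n q (pullback W A) (pullback W B)).
Proof.
split=> [[c hc] m n m_ge2 m_le_n W W_coemb q q_pos A B|h_invariant].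
  have n_ge2 := leq_trans m_ge2 m_le_n; have [W_channel _] := W_coemb.
  have Wq_pos := markov_map_posdist W_channel q_pos.
  by rewrite !hc // fisher_cometric_coembedding // ltnW.
exact: invariant_fisher_multiple.
Qed.
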